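(* Let $A$ be a selfadjoint operator on a separable infinite-dimensional Hilbert space $\mathcal{H}$ which is bounded below, let $a<\inf\sigma(A)$, and let $\mathcal{L}_n\subset\operatorname{D}((A-a)^{1/2})$ be a finite-dimensional subspace. Let $\mathcal{G}_n=(A-a)^{1/2}\mathcal{L}_n$ with orthogonal projection $p_n$. Then for every real $\lambda\neq a$, \[ \lambda\in\sigma(\pi_nA|_{\mathcal{L}_n})\iff(\lambda-a)^{-1}\in\sigma\big(p_n(A-a)^{-1}|_{\mathcal{G}_n}\big). \]
   Context: Here $\pi_nA|_{\mathcal{L}_n}:\mathcal{L}_n\to\mathcal{L}_n$ denotes the compression of $A$ defined via the quadratic form: for $x\in\mathcal{L}_n$ it is the unique element $A_nx\in\mathcal{L}_n$ with $\langle y,A_nx\rangle=\langle(A-a)^{1/2}y,(A-a)^{1/2}x\rangle+a\langle y,x\rangle$ for all $y\in\mathcal{L}_n$. *)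

From mathcomp Require Import all_boot all_order all_algebra.
From mathcomp Require Import reals.
From mathcomp Require Export complex.
Set Implicit Arguments. Unset Strict Implicit. Unset Printing Implicit Defensive.
Import Order.TTheory GRing.Theory Num.Theory.
Local Open Scope ring_scope.

Section Hilbert.
Variable R : realType.
Variable V : lmodType R[i].
Variable ip : V -> V -> R[i].  (* inner product, linear in the first slot *)

Definition nsq (x : V) : R := complex.Re (ip x x).

Definition in_span n (e : 'I_n -> V) (x : V) : Prop :=
  exists c : 'I_n -> R[i], x = \sum_(i < n) c i *: e i.

Record is_separable_inf_dim_hilbert : Prop := {
  ip_linear : forall (c : R[i]) x y z, ip (c *: x + y) z = c * ip x z + ip y z;
  ip_conj : forall x y, ip x y = (ip y x)^*;
  ip_nonneg : forall x, 0 <= ip x x;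
  ip_definite : forall x, ip x x = 0 -> x = 0;
  ip_complete : forall u : nat -> V,
    (forall eps : R, 0 < eps -> exists N, forall m n, (N <= m)%N -> (N <= n)%N ->
       nsq (u m - u n) < eps) ->
    exists l, forall eps : R, 0 < eps -> exists N, forall n, (N <= n)%N -> nsq (u n - l) < eps;
  ip_separable : exists d : nat -> V, forall x (eps : R), 0 < eps ->
    exists n, nsq (x - d n) < eps;
  ip_inf_dim : forall n (e : 'I_n -> V), exists x, ~ in_span e x
}.

(* Unbounded operators are given by a domain D and a map f defined on D. *)
Definition subspace (D : V -> Prop) : Prop :=
  D 0 /\ forall (c : R[i]) x y, D x -> D y -> D (c *: x + y).

Definition linear_on (D : V -> Prop) (f : V -> V) : Prop :=
  forall (c : R[i]) x y, D x -> D y -> f (c *: x + y) = c *: f x + f y.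

Definition dense (D : V -> Prop) : Prop :=
  forall x (eps : R), 0 < eps -> exists y, D y /\ nsq (x - y) < eps.

(* A = A^*: the adjoint has domain {y | exists z, forall x in D, <Ax,y> = <x,z>}. *)
Definition selfadjoint (D : V -> Prop) (f : V -> V) : Prop :=
  [/\ subspace D, linear_on D f, dense D,
      (forall y, D y <-> exists z, forall x, D x -> ip (f x) y = ip x z) &
      (forall x y, D x -> D y -> ip (f x) y = ip x (f y))].

Definition bounded_below (D : V -> Prop) (f : V -> V) : Prop :=
  exists m : R, forall x, D x -> m * nsq x <= complex.Re (ip (f x) x).

Definition in_resolvent (D : V -> Prop) (f : V -> V) (mu : R[i]) : Prop :=
  (forall y, exists x, D x /\ f x - mu *: x = y) /\
  exists c : R, forall x, D x -> nsq x <= c * nsq (f x - mu *: x).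

Definition spectrum (D : V -> Prop) (f : V -> V) (mu : R[i]) : Prop :=
  ~ in_resolvent D f mu.

Definition below_spectrum (D : V -> Prop) (f : V -> V) (a : R) : Prop :=
  exists b : R, a < b /\ forall mu, spectrum D f mu -> (b%:C)%C <= mu.

Definition is_sqrt_shift (DA : V -> Prop) (f : V -> V) (a : R)
    (DS : V -> Prop) (s : V -> V) : Prop :=
  [/\ selfadjoint DS s,
      (forall x, DS x -> 0 <= ip (s x) x),
      (forall x, DA x <-> (DS x /\ DS (s x))) &
      (forall x, DA x -> s (s x) = f x - (a%:C)%C *: x)].

Definition spectrum_on (W : V -> Prop) (T : V -> V) (mu : R[i]) : Prop :=
  ~ ((forall y, W y -> exists x, W x /\ T x - mu *: x = y) /\
     (forall x, W x -> T x - mu *: x = 0 -> x = 0)).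

End Hilbert.

From mathcomp Require Import all_boot all_order all_algebra.
From mathcomp Require Import reals complex.
From mathcomp Require Import ring.
Set Implicit Arguments. Unset Strict Implicit. Unset Printing Implicit Defensive.
Import Order.TTheory GRing.Theory Num.Theory.
Local Open Scope ring_scope.

(* For x, y in L_n let q(x, y) = <S x, S y> - (lambda - a) <x, y>, where S = (A - a)^{1/2}.
   The defining form of the compression gives <(A_n - lambda) x, y> = q(x, y), and since
   S (A - a)^{-1} S = 1 on D(S), also <(p_n (A - a)^{-1} - mu) S x, S y> = - mu q(x, y) with
   mu = (lambda - a)^{-1}.  An operator T on a subspace W is invertible iff the form
   <T x, y> on W is nondegenerate and represents every functional <u, .> with u in W.  As S maps
   L_n onto G_n, and the functionals <S x0, S .> on L_n are exactly the <u, .> (through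
   u = (A_n - a) x0 and S x0 = p_n (A - a)^{-1} S u), both spectral conditions say the same
   thing about q. *)

Lemma conjC_real (R : realType) (r : R) : (r%:C)%C^* = (r%:C)%C.
Proof. by apply: conj_Creal; apply/complex_realP; exists r. Qed.

Section Subspaces.
Variables (R : realType) (V : lmodType R[i]).
Implicit Types (D W : V -> Prop) (f : V -> V).

Lemma subspaceZ D k x : subspace D -> D x -> D (k *: x).
Proof. by move=> [D0 DZD] Dx; rewrite -[_ *: x]addr0; apply: DZD. Qed.

Lemma subspaceB D x y : subspace D -> D x -> D y -> D (x - y).
Proof.
by move=> [D0 DZD] Dx Dy; rewrite addrC -scaleN1r; apply: DZD.
Qed.

Lemma linear_on0 D f : subspace D -> linear_on D f -> f 0 = 0.
Proof.
move=> [D0 _] flin; have := flin (-1) 0 0 D0 D0.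
by rewrite scaler0 addr0 scaleN1r addNr.
Qed.

Lemma linear_onB D f x y : subspace D -> linear_on D f -> D x -> D y ->
  f (x - y) = f x - f y.
Proof.
move=> Dsub flin Dx Dy; rewrite addrC -scaleN1r flin //.
by rewrite scaleN1r addrC.
Qed.

Lemma subspace_span n (e : 'I_n -> V) : subspace (in_span e).
Proof.
split; first by exists (fun=> 0); rewrite big1 // => i _; rewrite scale0r.
move=> k _ _ [cx ->] [cy ->]; exists (fun i => k * cx i + cy i).
rewrite scaler_sumr -big_split /=.
by apply: eq_bigr => i _; rewrite scalerDl scalerA.
Qed.

Lemma span_sub D n (e : 'I_n -> V) x :
  subspace D -> (forall i, D (e i)) -> in_span e x -> D x.
Proof.
move=> Dsub De [c ->]; apply: (big_ind D) => [|y z Dy Dz|i _].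
- exact: proj1 Dsub.
- by rewrite -[y]scale1r; apply: (proj2 Dsub).
- exact: subspaceZ.
Qed.

Lemma subspace_image D W f : subspace D -> linear_on D f ->
  subspace W -> (forall x, W x -> D x) ->
  subspace (fun y => exists x, W x /\ y = f x).
Proof.
move=> Dsub flin [W0 WZD] WD; split.
  by exists 0; rewrite (linear_on0 Dsub flin).
move=> k _ _ [x [Wx ->]] [y [Wy ->]].
by exists (k *: x + y); split; [apply: WZD | rewrite flin //; apply: WD].
Qed.

Definition invertible_on W (T : V -> V) : Prop :=
  (forall y, W y -> exists x, W x /\ T x = y) /\ (forall x, W x -> T x = 0 -> x = 0).

End Subspaces.

Section InnerProduct.
Variables (R : realType) (V : lmodType R[i]) (ip : V -> V -> R[i]).
Hypothesis hilbert : is_separable_inf_dim_hilbert ip.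

Lemma ip0l z : ip 0 z = 0.
Proof.
have := ip_linear hilbert 1 0 0 z; rewrite scale1r addr0 mul1r => h.
by apply/eqP; rewrite -(subrr (ip 0 z)) {2}h addrK.
Qed.

Lemma ipZl c x z : ip (c *: x) z = c * ip x z.
Proof. by have := ip_linear hilbert c x 0 z; rewrite addr0 ip0l addr0. Qed.

Lemma ipBl x y z : ip (x - y) z = ip x z - ip y z.
Proof. by rewrite -scaleN1r addrC ip_linear // mulN1r addrC. Qed.

Lemma nsq_le0 x : nsq ip x <= 0 -> x = 0.
Proof.
move=> le0; apply: (ip_definite hilbert).
move: (ip_nonneg hilbert x); rewrite lecE /= => /andP[/eqP Im0 Re_ge0].
have Re0 : complex.Re (ip x x) = 0 by apply/eqP; rewrite eq_le le0 Re_ge0.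
by move: Im0 Re0; case: (ip x x) => r s /= -> ->.
Qed.

Lemma resolvent_kernel_trivial D f mu x : in_resolvent ip D f mu -> D x ->
  f x - mu *: x = 0 -> x = 0.
Proof.
move=> [_ [c bound]] Dx fx0; apply: nsq_le0.
by have := bound x Dx; rewrite fx0 /nsq ip0l mulr0.
Qed.

Lemma below_spectrum_kernel_trivial D f a x : below_spectrum ip D f a -> D x ->
  f x - (a%:C)%C *: x = 0 -> x = 0.
Proof.
move=> [b [ab below]] Dx fx0; have [//|x_neq0] := eqVneq x 0.
suff /below : spectrum ip D f (a%:C)%C by rewrite lecR leNgt ab.
by move=> res; move/eqP: x_neq0; apply; apply: resolvent_kernel_trivial Dx fx0.
Qed.

Definition invertible_form (W : V -> Prop) (q : V -> V -> R[i]) : Prop :=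
  (forall x, W x -> (forall y, W y -> q x y = 0) -> x = 0) /\
  (forall u, W u -> exists2 x, W x & forall y, W y -> q x y = ip u y).

Lemma invertible_onP W T q : (forall x y, W x -> W y -> W (x - y)) ->
  (forall x, W x -> W (T x)) ->
  (forall x y, W x -> W y -> ip (T x) y = q x y) ->
  invertible_on W T <-> invertible_form W q.
Proof.
move=> WB WT Tq.
have orth0 u : W u -> (forall y, W y -> ip u y = 0) -> u = 0.
  by move=> Wu u_orth; apply: (ip_definite hilbert); apply: u_orth.
split=> [[Tsurj Tinj] | [qinj qsurj]]; split.
- move=> x Wx qx0; apply: Tinj => //; apply: orth0 => [|y Wy]; first exact: WT.
  by rewrite Tq ?qx0.
- move=> u Wu; have [x [Wx <-]] := Tsurj u Wu.
  by exists x => // y Wy; rewrite Tq.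
- move=> u Wu; have [x Wx qxu] := qsurj u Wu; exists x; split=> //.
  apply/eqP; rewrite -subr_eq0; apply/eqP.
  apply: orth0 => [|y Wy]; first by apply: WB => //; apply: WT.
  by rewrite ipBl Tq // qxu // subrr.
- move=> x Wx Tx0; apply: qinj => // y Wy.
  by rewrite -Tq // Tx0 ip0l.
Qed.

End InnerProduct.

Section SquareRoot.
Variables (R : realType) (V : lmodType R[i]) (ip : V -> V -> R[i]).
Variables (DA : V -> Prop) (A : V -> V) (a : R) (DS : V -> Prop) (S : V -> V).
Variable Rinv : V -> V.
Hypothesis hilbert : is_separable_inf_dim_hilbert ip.
Hypothesis below : below_spectrum ip DA A a.
Hypothesis sqrtS : is_sqrt_shift ip DA A a DS S.
Hypothesis RinvK : forall y, DA (Rinv y) /\ A (Rinv y) - (a%:C)%C *: Rinv y = y.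

Lemma sqrt_subspace : subspace DS.
Proof. by case: sqrtS => -[]. Qed.

Lemma sqrt_linear : linear_on DS S.
Proof. by case: sqrtS => -[]. Qed.

Lemma sqrt_kernel_trivial x : DS x -> S x = 0 -> x = 0.
Proof.
case: sqrtS => _ _ DAE SS DSx Sx0.
have S0 := linear_on0 sqrt_subspace sqrt_linear.
have DAx : DA x by apply/DAE; rewrite Sx0; split=> //; apply: (proj1 sqrt_subspace).
by apply: (below_spectrum_kernel_trivial hilbert below DAx); rewrite -SS // Sx0.
Qed.

Lemma sqrt_resolvent_sqrt x : DS x -> S (Rinv (S x)) = x.
Proof.
case: sqrtS => _ _ DAE SS DSx; have [DAw Aw] := RinvK (S x).
have [DSw DSSw] := proj1 (DAE _) DAw.
apply/eqP; rewrite -subr_eq0; apply/eqP; apply: sqrt_kernel_trivial.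
  exact: subspaceB sqrt_subspace DSSw DSx.
by rewrite (linear_onB sqrt_subspace sqrt_linear) // SS // Aw subrr.
Qed.

Lemma ip_resolvent_sqrt x y : DS x -> DS y -> ip (Rinv (S x)) (S y) = ip x y.
Proof.
case: sqrtS => -[_ _ _ _ Ssym] _ DAE _ DSx DSy.
have [DSw _] := proj1 (DAE _) (proj1 (RinvK (S x))).
by rewrite -Ssym // sqrt_resolvent_sqrt.
Qed.

End SquareRoot.

Section Compression.
Variables (R : realType) (V : lmodType R[i]) (ip : V -> V -> R[i]).
Variables (DA : V -> Prop) (A : V -> V) (a : R) (DS : V -> Prop) (S : V -> V).
Variables (Rinv : V -> V) (n : nat) (e : 'I_n -> V) (P An : V -> V).
Hypothesis hilbert : is_separable_inf_dim_hilbert ip.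
Hypothesis below : below_spectrum ip DA A a.
Hypothesis sqrtS : is_sqrt_shift ip DA A a DS S.
Hypothesis RinvK : forall y, DA (Rinv y) /\ A (Rinv y) - (a%:C)%C *: Rinv y = y.
Hypothesis eDS : forall i, DS (e i).

Let L := in_span e.
Let G := fun y => exists x, L x /\ y = S x.

Hypothesis Pproj : forall v, G (P v) /\ forall y, G y -> ip (v - P v) y = 0.
Hypothesis AnE : forall x, L x -> L (An x) /\
  forall y, L y -> ip y (An x) = ip (S y) (S x) + (a%:C)%C * ip y x.

Let DS_subspace := sqrt_subspace sqrtS.
Let L_subspace := subspace_span e.

Lemma span_sqrt_domain x : L x -> DS x.
Proof. exact: span_sub DS_subspace eDS. Qed.

Let G_subspace : subspace G.
Proof.
exact: subspace_image DS_subspace (sqrt_linear sqrtS) L_subspace span_sqrt_domain.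
Qed.

Lemma compression_ipl x y : L x -> L y ->
  ip (An x) y = ip (S x) (S y) + (a%:C)%C * ip x y.
Proof.
move=> Lx Ly; rewrite (ip_conj hilbert) (proj2 (AnE Lx)) // rmorphD rmorphM /=.
by rewrite conjC_real -!(ip_conj hilbert).
Qed.

Lemma projection_ip_sqrt v y : L y -> ip (P v) (S y) = ip v (S y).
Proof.
move=> Ly; have /eqP := proj2 (Pproj v) (S y) (ex_intro _ y (conj Ly erefl)).
by rewrite (ipBl hilbert) subr_eq0 => /eqP.
Qed.

Variable lambda : R.
Hypothesis lambda_neq_a : lambda != a.

Let mu := (((lambda - a)^-1)%:C)%C.
Let q x y := ip (S x) (S y) - ((lambda - a)%:C)%C * ip x y.

Lemma compression_invertible :
  invertible_on L (fun x => An x - (lambda%:C)%C *: x) <-> invertible_form ip L q.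
Proof.
apply: invertible_onP => // [x y Lx Ly | x Lx | x y Lx Ly].
- exact: subspaceB.
- by apply: subspaceB (proj1 (AnE Lx)) _ => //; apply: subspaceZ.
- by rewrite (ipBl hilbert) (ipZl hilbert) compression_ipl // /q rmorphB /=; ring.
Qed.

Lemma resolvent_compression_ip x y : L x -> L y ->
  ip (P (Rinv (S x)) - mu *: S x) (S y) = - mu * q x y.
Proof.
move=> Lx Ly; have [DSx DSy] := (span_sqrt_domain Lx, span_sqrt_domain Ly).
have mu_inv : mu * ((lambda - a)%:C)%C = 1.
  by rewrite /mu -rmorphM mulVf ?subr_eq0.
rewrite (ipBl hilbert) (ipZl hilbert) projection_ip_sqrt // (ip_resolvent_sqrt hilbert below sqrtS RinvK) //.
by rewrite /q mulrBr mulrA mulNr mulNr mu_inv mulN1r opprK addrC.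
Qed.

Lemma resolvent_compression_invertible :
  invertible_on G (fun g => P (Rinv g) - mu *: g) <-> invertible_form ip L q.
Proof.
have GS x : L x -> G (S x) by exists x.
have GT g : G g -> G (P (Rinv g) - mu *: g).
  by move=> Gg; apply: subspaceB (proj1 (Pproj _)) _ => //; apply: subspaceZ.
have Nmu_neq0 : - mu != 0 by rewrite oppr_eq0 fmorph_eq0 invr_eq0 subr_eq0.
have formG := invertible_onP hilbert (fun x y => subspaceB G_subspace) GT
  (fun _ _ _ _ => erefl).
apply: iff_trans formG _.
split=> -[inj surj]; split.
- move=> x Lx qx0; apply: (sqrt_kernel_trivial hilbert below sqrtS (span_sqrt_domain Lx)).
  apply: inj (GS x Lx) _ => _ [y [Ly ->]].
  by rewrite resolvent_compression_ip // qx0 // mulr0.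
- move=> u Lu; have Gu := subspaceZ (- mu) G_subspace (proj1 (Pproj (Rinv (S u)))).
  have [_ [x [Lx ->]] hx] := surj _ Gu; exists x => // y Ly.
  apply: (mulfI Nmu_neq0); rewrite -resolvent_compression_ip // hx; last exact: GS.
  have [DSu DSy] := (span_sqrt_domain Lu, span_sqrt_domain Ly).
  by rewrite (ipZl hilbert) projection_ip_sqrt // (ip_resolvent_sqrt hilbert below sqrtS RinvK).
- move=> _ [x [Lx ->]] h0.
  rewrite (inj x Lx) ?(linear_on0 DS_subspace (sqrt_linear sqrtS)) // => y Ly.
  have := h0 _ (GS y Ly); rewrite resolvent_compression_ip // => /eqP.
  by rewrite mulf_eq0 (negbTE Nmu_neq0) => /eqP.
- move=> _ [x0 [Lx0 ->]].
  have Lu : L ((- mu)^-1 *: (An x0 - (a%:C)%C *: x0)).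
    apply: subspaceZ L_subspace _; apply: subspaceB (proj1 (AnE Lx0)) _ => //.
    exact: subspaceZ.
  have [x Lx hx] := surj _ Lu; exists (S x); first exact: GS.
  move=> _ [y [Ly ->]]; rewrite resolvent_compression_ip // hx // !(ipZl hilbert) (ipBl hilbert).
  by rewrite (ipZl hilbert) compression_ipl // addrK mulVKf.
Qed.

End Compression.

Theorem lemma4p5 (R : realType) (V : lmodType R[i]) (ip : V -> V -> R[i])
  (DA : V -> Prop) (A : V -> V) (a : R)
  (DS : V -> Prop) (S : V -> V)        (* S = (A - a)^{1/2} *)
  (Rinv : V -> V)                      (* Rinv = (A - a)^{-1} *)
  (n : nat) (e : 'I_n -> V)            (* L_n = span e *)
  (P : V -> V)                         (* p_n *)
  (An : V -> V) :                      (* pi_n A |_{L_n} *)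
  is_separable_inf_dim_hilbert ip ->
  selfadjoint ip DA A ->
  bounded_below ip DA A ->
  below_spectrum ip DA A a ->
  is_sqrt_shift ip DA A a DS S ->
  (forall y, DA (Rinv y) /\ A (Rinv y) - (a%:C)%C *: Rinv y = y) ->
  (forall i, DS (e i)) ->
  let L := in_span e in
  let G := fun y => exists x, L x /\ y = S x in
  (forall v, G (P v) /\ forall y, G y -> ip (v - P v) y = 0) ->
  (forall x, L x -> L (An x) /\
     forall y, L y -> ip y (An x) = ip (S y) (S x) + (a%:C)%C * ip y x) ->
  forall lambda : R, lambda != a ->
    (spectrum_on L An (lambda%:C)%C <->
     spectrum_on G (fun y => P (Rinv y)) (((lambda - a)^-1)%:C)%C).
Proof.
move=> hilbert _ _ below sqrtS RinvK eDS L G Pproj AnE lambda lambda_neq_a.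
apply: not_iff_compat.
apply: iff_trans (compression_invertible hilbert AnE lambda) _.
apply: iff_sym.
exact (resolvent_compression_invertible hilbert below sqrtS RinvK eDS Pproj AnE lambda_neq_a).
Qed.
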